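(* Assume the rearrangement setting described in the context, and assume additionally that: - $X$ is convex in $R$; and - there is no walk in $R$ that starts in $M$ and ends in $Y$, and no walk in $R$ that starts in $Y$ and ends in $M$. Let $z_0,\dots,z_I$ be a walk in $S$, and let $K=\{i\in\{1,\dots,I\}: z_{i-1}z_i\notin A_r\}$. Then $\#K\le 2$. Moreover, if $K=\{k,\ell\}$ with $k<\ell$, then there exist $m,n\in M$ and $x,y\in X$ such that: - $mx$ and $yn$ are proper arcs of $R$; - $z_{k-1}z_k=m\beta(x)\in A_d$; - $z_{\ell-1}z_\ell=\beta(y)n\in A_u$.
   Context: **Digraphs.** - A digraph $G$ is a pair $(V(G),A(G))$, where $V(G)$ is a finite non-empty set and $A(G)\subseteq V(G)\times V(G)$. Arcs are written $vw$. - An arc $vw$ with $v\ne w$ is proper. - Two vertices $u,w$ are adjacent if $uw\in A(G)$ or $wu\in A(G)$. $N_G(v)$ is the set of $w\ne v$ adjacent to $v$. - A walk is a sequence $v_0,\dots,v_I$ with $I\ge1$ and $v_{i-1}v_i\in A(G)$ for all $i$. - A set $X\subseteq V(G)$ is convex if every walk starting and ending in $X$ has all its vertices in $X$. **Rearrangement setting.** - $R=(Z,A(R))$ is a digraph. - $X,M\subseteq Z$ are disjoint. - $Y\subseteq Z$ satisfies $M\cap Y=\emptyset$ and $M\cap N_R(y)=\emptyset$ for all $y\in Y$. - $\beta:X\to Y$ is a map. - $S$ is the digraph with $V(S)=Z$ and $A(S)=A_r\cup A_d\cup A_u$, where: - $A_r=A(R)\setminus((M\times X)\cup(X\times M))$;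 - $A_d=\{m\beta(x): mx\in A(R)\cap(M\times X)\}$; - $A_u=\{\beta(x)m: xm\in A(R)\cap(X\times M)\}$. *)

From mathcomp Require Import all_boot.
Set Implicit Arguments. Unset Strict Implicit. Unset Printing Implicit Defensive.

Definition adjacent (Z : finType) (G : rel Z) (u w : Z) : bool := G u w || G w u.

Definition nbhd (Z : finType) (G : rel Z) (v : Z) : {set Z} :=
  [set w | (w != v) && adjacent G v w].

Definition walk (Z : finType) (G : rel Z) (z : nat -> Z) (I : nat) : Prop :=
  1 <= I /\ forall i, 1 <= i <= I -> G (z i.-1) (z i).

Definition convex (Z : finType) (G : rel Z) (X : {set Z}) : Prop :=
  forall (z : nat -> Z) (I : nat), walk G z I -> z 0 \in X -> z I \in X ->
    forall i, i <= I -> z i \in X.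

Definition A_r (Z : finType) (R : rel Z) (X M : {set Z}) : rel Z :=
  fun u v => R u v && ~~ ((u \in M) && (v \in X)) && ~~ ((u \in X) && (v \in M)).

Definition A_d (Z : finType) (R : rel Z) (X M : {set Z}) (beta : Z -> Z) : rel Z :=
  fun u v => [exists x, [&& x \in X, u \in M, R u x & v == beta x]].

Definition A_u (Z : finType) (R : rel Z) (X M : {set Z}) (beta : Z -> Z) : rel Z :=
  fun u v => [exists x, [&& x \in X, v \in M, R x v & u == beta x]].

Definition S_arc (Z : finType) (R : rel Z) (X M : {set Z}) (beta : Z -> Z) : rel Z :=
  fun u v => [|| A_r R X M u v, A_d R X M beta u v | A_u R X M beta u v].

From mathcomp Require Import all_boot.
From mathcomp Require Import zify.

Set Implicit Arguments.
Unset Strict Implicit.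
Unset Printing Implicit Defensive.

(* An arc of the walk in S that is not in A_r is "new"; it is either a down
   arc m -> beta x (with m in M, mx an arc of R) or an up arc beta y -> n
   (with n in M, yn an arc of R).  Between two new arcs with no new arc in
   between, the walk runs along arcs of R.  Checking the four type
   combinations, the hypotheses (no R-walk between M and Y in either
   direction, convexity of X, X and M disjoint) exclude everything except a
   down arc followed by an up arc.  By strong induction on the distance the
   same holds for any two new arcs, since a new arc strictly between them
   would have to be both an up arc and a down arc, i.e. leave a vertex
   lying in both M and Y.  Hence at most one new arc leaves M and at most one does not, so
   there are at most two; with exactly two, the first is a down arc and the
   second an up arc, which gives the required witnesses. *)

Lemma walk_shift (Z : finType) (G : rel Z) (z : nat -> Z) (i j : nat) :
  i < j -> (forall p, i < p <= j -> G (z p.-1) (z p)) ->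
  walk G (fun t => z (i + t)) (j - i).
Proof.
move=> hij hG; split=> [|t ht]; first lia.
have -> : i + t.-1 = (i + t).-1 by lia.
apply: hG; lia.
Qed.

Lemma walk_segment_snoc (Z : finType) (G : rel Z) (z : nat -> Z) (i j : nat) (b : Z) :
  i <= j -> (forall p, i < p <= j -> G (z p.-1) (z p)) -> G (z j) b ->
  walk G (fun t => if t <= j - i then z (i + t) else b) (j - i).+1.
Proof.
move=> hij hG hb; split=> // t /andP [t_gt0 t_le].
have -> : t.-1 <= j - i by lia.
case: (leqP t (j - i)) => ht.
  have -> : i + t.-1 = (i + t).-1 by lia.
  apply: hG; lia.
have -> : i + t.-1 = j by lia.
exact: hb.
Qed.

Lemma walk_cons (Z : finType) (G : rel Z) (w : nat -> Z) (J : nat) (a : Z) :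
  walk G w J -> G a (w 0) -> walk G (fun t => if t is t'.+1 then w t' else a) J.+1.
Proof.
case=> hJ hw ha; split=> // [[|[|t]]] //= ht.
by apply: (hw t.+1); lia.
Qed.

Lemma card_le1_ord (n : nat) (A : {set 'I_n}) :
  (forall a b, a \in A -> b \in A -> val a < val b -> False) -> #|A| <= 1.
Proof.
move=> hA; apply/card_le1_eqP=> a b ha hb.
case: (ltngtP (val a) (val b)) => hab; last exact: val_inj.
- by case: (hA a b ha hb hab).
- by case: (hA b a hb ha hab).
Qed.

Section Rearrangement.

Variables (Z : finType) (R : rel Z) (X M Y : {set Z}) (beta : Z -> Z).

Hypothesis hXM : [disjoint X & M].
Hypothesis hMY : [disjoint M & Y].
Hypothesis hbeta : forall x, x \in X -> beta x \in Y.
Hypothesis hconv : convex R X.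
Hypothesis hnoMY :
  forall (w : nat -> Z) (J : nat), walk R w J -> w 0 \in M -> w J \in Y -> False.
Hypothesis hnoYM :
  forall (w : nat -> Z) (J : nat), walk R w J -> w 0 \in Y -> w J \in M -> False.

Lemma notXM (a : Z) : a \in X -> a \in M -> False.
Proof. by move=> ha; rewrite (disjointFr hXM ha). Qed.

Lemma notMY (a : Z) : a \in M -> a \in Y -> False.
Proof. by move=> ha; rewrite (disjointFr hMY ha). Qed.

Definition down_arc (u v : Z) : Prop :=
  u \in M /\ exists x, [/\ x \in X, R u x & v = beta x].

Definition up_arc (u v : Z) : Prop :=
  v \in M /\ exists y, [/\ y \in X, R y v & u = beta y].

Lemma new_arc_cases (u v : Z) :
  S_arc R X M beta u v -> ~~ A_r R X M u v -> down_arc u v \/ up_arc u v.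
Proof.
rewrite /S_arc => /or3P [->//|/existsP [x /and4P [hx hu hR /eqP ->]]|
  /existsP [x /and4P [hx hv hR /eqP ->]]] _.
- by left; split=> //; exists x.
- by right; split=> //; exists x.
Qed.

(* A down arc leaves M, an up arc leaves Y; so no arc is of both kinds. *)
Lemma up_arc_tail_Y (u v : Z) : up_arc u v -> u \in Y.
Proof. by case=> _ [y [hy _ ->]]; exact: hbeta. Qed.

Lemma down_arc_head_Y (u v : Z) : down_arc u v -> v \in Y.
Proof. by case=> _ [x [hx _ ->]]; exact: hbeta. Qed.

Lemma down_up_exclusive (u v : Z) : down_arc u v -> up_arc u v -> False.
Proof. by case=> huM _ /up_arc_tail_Y; exact: notMY. Qed.

Lemma no_segment_Y_M (z : nat -> Z) (i j : nat) :
  i <= j -> (forall p, i < p <= j -> R (z p.-1) (z p)) ->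
  z i \in Y -> z j \in M -> False.
Proof.
rewrite leq_eqVlt => /orP [/eqP <- _ hY hM|hij hR hY hM]; first exact: notMY hM hY.
have := hnoYM (walk_shift hij hR); rewrite /= addn0 subnKC ?(ltnW hij) //; exact.
Qed.

Lemma no_segment_M_Y (z : nat -> Z) (i j : nat) :
  i <= j -> (forall p, i < p <= j -> R (z p.-1) (z p)) ->
  z i \in M -> z j \in Y -> False.
Proof.
rewrite leq_eqVlt => /orP [/eqP <- _ hM hY|hij hR hM hY]; first exact: notMY hM hY.
have := hnoMY (walk_shift hij hR); rewrite /= addn0 subnKC ?(ltnW hij) //; exact.
Qed.

Lemma segment_between_X (z : nat -> Z) (i j : nat) (x x' : Z) :
  i <= j -> (forall p, i < p <= j -> R (z p.-1) (z p)) ->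
  x \in X -> x' \in X -> R x (z i) -> R (z j) x' -> z i \in X.
Proof.
move=> hij hR hx hx' hxi hjx'.
have hw := walk_cons (walk_segment_snoc hij hR hjx') (a := x).
rewrite /= addn0 in hw.
have := hconv (hw hxi) hx; rewrite /= ltnn => /(_ hx' 1 isT).
by rewrite /= addn0.
Qed.

Section NewArcs.

Variables (z : nat -> Z) (I : nat).
Hypothesis hS : forall p, 1 <= p <= I -> S_arc R X M beta (z p.-1) (z p).

Definition new_arc (p : nat) : bool := (0 < p <= I) && ~~ A_r R X M (z p.-1) (z p).

Lemma new_arc_kind (p : nat) :
  new_arc p -> down_arc (z p.-1) (z p) \/ up_arc (z p.-1) (z p).
Proof. by case/andP=> hp; apply: new_arc_cases; exact: hS. Qed.

Lemma old_arc_in_R (p : nat) : 0 < p <= I -> ~~ new_arc p -> R (z p.-1) (z p).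
Proof. by move=> hp; rewrite /new_arc hp negbK => /andP [/andP []]. Qed.

Lemma consecutive_new_arcs (i j : nat) :
  new_arc i -> new_arc j -> i < j -> (forall p, i < p < j -> ~~ new_arc p) ->
  down_arc (z i.-1) (z i) /\ up_arc (z j.-1) (z j).
Proof.
move=> hi hj hij hbetween.
have hseg : forall p, i < p <= j.-1 -> R (z p.-1) (z p).
  move=> p hp; apply: old_arc_in_R; last by apply: hbetween; lia.
  by case/andP: hj => /andP [_ hjI] _; lia.
have hij' : i <= j.-1 by lia.
case: (new_arc_kind hi) => [hdi|hui]; case: (new_arc_kind hj) => [hdj|huj].
- by case: (no_segment_Y_M hij' hseg (down_arc_head_Y hdi) hdj.1).
- by [].
- exfalso; case: hui => hiM [x [hx hxi _]]; case: hdj => _ [x' [hx' hjx' _]].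
  exact: notXM (segment_between_X hij' hseg hx hx' hxi hjx') hiM.
- by case: (no_segment_M_Y hij' hseg hui.1 (up_arc_tail_Y huj)).
Qed.

Lemma new_arcs_down_up (i j : nat) :
  new_arc i -> new_arc j -> i < j ->
  down_arc (z i.-1) (z i) /\ up_arc (z j.-1) (z j).
Proof.
move: {2}(j - i) (leqnn (j - i)) => n; elim: n i j => [|n IH] i j hn hi hj hij.
  by lia.
apply: consecutive_new_arcs => // p /andP [hip hpj]; apply/negP => hp.
have [_ hup] := IH i p ltac:(lia) hi hp hip.
have [hdown _] := IH p j ltac:(lia) hp hj hpj.
exact: down_up_exclusive hdown hup.
Qed.

End NewArcs.

End Rearrangement.

Theorem lemma6 (Z : finType) (R : rel Z) (X M Y : {set Z}) (beta : Z -> Z)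
  (hXM : [disjoint X & M])
  (hMY : [disjoint M & Y])
  (hMN : forall y, y \in Y -> [disjoint M & nbhd R y])
  (hbeta : forall x, x \in X -> beta x \in Y)
  (hconv : convex R X)
  (hnoMY : forall (w : nat -> Z) (J : nat), walk R w J -> w 0 \in M -> w J \in Y -> False)
  (hnoYM : forall (w : nat -> Z) (J : nat), walk R w J -> w 0 \in Y -> w J \in M -> False)
  (z : nat -> Z) (I : nat) (hwalk : walk (S_arc R X M beta) z I) :
  let K := [set i : 'I_I.+1 | (0 < val i) && ~~ A_r R X M (z (val i).-1) (z (val i))] in
  #|K| <= 2 /\
  (forall k l : 'I_I.+1, val k < val l -> K = [set k; l] ->
     exists m n x y : Z,
       [/\ m \in M, n \in M, x \in X & y \in X] /\
       [/\ R m x, m != x, R y n & y != n] /\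
       [/\ z (val k).-1 = m, z (val k) = beta x & A_d R X M beta (z (val k).-1) (z (val k))] /\
       [/\ z (val l).-1 = beta y, z (val l) = n & A_u R X M beta (z (val l).-1) (z (val l))]).
Proof.
move=> K; case: hwalk => _ hS.
have down_up := new_arcs_down_up hXM hMY hbeta hconv hnoMY hnoYM hS.
have inK (i : 'I_I.+1) : (i \in K) = new_arc R X M z I i.
  by rewrite inE /new_arc -[val i <= I]ltnS ltn_ord andbT.
split.
- rewrite -(cardsID [set i | z (val i).-1 \in M] K).
  rewrite -[2]/(1 + 1); apply: leq_add; apply: card_le1_ord => a b.
  + rewrite !in_setI !inK !inE => /andP [ha haM] /andP [hb hbM] hab.
    have [_ /(up_arc_tail_Y hbeta) hbY] := down_up _ _ ha hb hab.
    exact (notMY hMY hbM hbY).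
  + rewrite !in_setD !inK !inE => /andP [haM ha] /andP [_ hb] hab.
    have [[haM' _] _] := down_up _ _ ha hb hab.
    by rewrite haM' in haM.
- move=> k l hkl hK.
  have hk : k \in K by rewrite hK !inE eqxx.
  have hl : l \in K by rewrite hK !inE eqxx orbT.
  rewrite !inK in hk hl.
  have [[hm [x [hx hmx hzk]]] [hn [y [hy hyn hzl]]]] := down_up _ _ hk hl hkl.
  exists (z (val k).-1), (z (val l)), x, y; do 3!split=> //.
  + by apply/eqP => hmx_eq; apply: (notXM hXM hx); rewrite -hmx_eq.
  + by apply/eqP => hyn_eq; apply: (notXM hXM hy); rewrite hyn_eq.
  + split=> //; apply/existsP; exists x; by rewrite hx hm hmx hzk eqxx.
  + split=> //; apply/existsP; exists y; by rewrite hy hn hyn hzl eqxx.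
Qed.
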